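(* Let $(F_n)$ be the Fibonacci numbers ($F_0=0$, $F_1=1$, $F_{n+2}=F_{n+1}+F_n$), $(E_n)$ the sequence with $E_0=0$, $E_1=E_2=1$, $E_{n+3}=E_n+E_{n+2}$, and $(D_n)$ the sequence with $D_0=1$, $D_1=D_2=0$, $D_{n+3}=D_n+D_{n+1}$. Then $$D_n<E_{n-1}\ \text{ for all integers } n\ge 4,\qquad E_n<F_{n-1}\ \text{ for all integers } n\ge 6.$$ *)

From Stdlib Require Import Arith Lia List.
Import ListNotations.

Fixpoint F (n : nat) : nat :=
  match n with
  | 0 => 0
  | 1 => 1
  | S ((S m) as p) => F p + F m
  end.

Fixpoint E (n : nat) : nat :=
  match n with
  | 0 => 0
  | 1 => 1
  | 2 => 1
  | S ((S ((S m) as q)) as p) => E m + E p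
  end.

Fixpoint D (n : nat) : nat :=
  match n with
  | 0 => 1
  | 1 => 0
  | 2 => 0
  | S ((S ((S m) as q)) as p) => D m + D q
  end.
Example F_test : List.map F (List.seq 0 8) = 0::1::1::2::3::5::8::13::nil. Proof. reflexivity. Qed.
Example E_test : List.map E (List.seq 0 8) = 0::1::1::1::2::3::4::6::nil. Proof. reflexivity. Qed.
Example D_test : List.map D (List.seq 0 8) = 1::0::0::1::0::1::1::1::nil. Proof. reflexivity. Qed.

From Stdlib Require Import Arith Lia.

(* Both inequalities propagate along the recurrences, given three consecutive
   base cases:
     D_{n+3} = D_n + D_{n+1} < E_{n-1} + E_n <= E_{n-1} + E_{n+1} = E_{n+2},
     E_{n+3} = E_n + E_{n+2} < F_{n-1} + F_{n+1} <= F_n + F_{n+1} = F_{n+2},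
   using only that E and F are nondecreasing. *)

Lemma nat_ind3 (P : nat -> Prop) :
  P 0 -> P 1 -> P 2 ->
  (forall n, P n -> P (S n) -> P (S (S n)) -> P (S (S (S n)))) ->
  forall n, P n.
Proof.
  intros P0 P1 P2 step n.
  assert (triple : forall m, P m /\ P (S m) /\ P (S (S m))).
  { induction m as [|m [Pm [Pm1 Pm2]]]; auto. }
  apply triple.
Qed.

Lemma E_le_succ n : E n <= E (S n).
Proof. destruct n as [|[|[|n]]]; simpl; lia. Qed.

Lemma F_le_succ n : F n <= F (S n).
Proof. destruct n as [|n]; simpl; lia. Qed.

Lemma D_lt_E_shift k : D (4 + k) < E (3 + k).
Proof.
  induction k as [| | | k IH0 IH1 _] using nat_ind3; try (simpl; lia).
  change (D (5 + k) < E (4 + k)) in IH1.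
  change (D (4 + k) + D (5 + k) < E (3 + k) + E (5 + k)).
  assert (E (4 + k) <= E (5 + k)) by apply E_le_succ.
  lia.
Qed.

Lemma E_lt_F_shift k : E (6 + k) < F (5 + k).
Proof.
  induction k as [| | | k IH0 _ IH2] using nat_ind3; try (simpl; lia).
  change (E (8 + k) < F (7 + k)) in IH2.
  change (E (6 + k) + E (8 + k) < F (7 + k) + F (6 + k)).
  assert (F (5 + k) <= F (6 + k)) by apply F_le_succ.
  lia.
Qed.

Theorem theorem12 :
  (forall n : nat, 4 <= n -> D n < E (n - 1)) /\
  (forall n : nat, 6 <= n -> E n < F (n - 1)).
Proof.
  split; intros n Hn.
  - replace n with (4 + (n - 4)) by lia.
    replace (4 + (n - 4) - 1) with (3 + (n - 4)) by lia.
    apply D_lt_E_shift.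
  - replace n with (6 + (n - 6)) by lia.
    replace (6 + (n - 6) - 1) with (5 + (n - 6)) by lia.
    apply E_lt_F_shift.
Qed.
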